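(* Let $\Gamma\subset\mathbb{C}^*$ be a subgroup with the accumulation property, i.e. either $\Gamma$ contains an element $q$ with $|q|\ne1$, or $\Gamma$ contains a sequence $\gamma_n\to1$ in $\mathbb{C}^*$ with $\gamma_n\neq1$. If $R\in\mathbb{C}(z)$ and a homomorphism $\sigma:\Gamma\to\Gamma$ satisfy $R(\gamma z)=\sigma(\gamma)R(z)$ for all $\gamma\in\Gamma$, $z\in\mathbb{C}^*$, then $R(z)=cz^n$ for some $c\in\mathbb{C}^*$ and $n\in\mathbb{Z}$. *)

From HB Require Import structures.
From mathcomp Require Import all_boot all_order all_algebra.
From mathcomp Require Import complex.
From mathcomp Require Import reals.
Set Implicit Arguments. Unset Strict Implicit. Unset Printing Implicit Defensive.
Import Order.TTheory GRing.Theory Num.Theory.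
Local Open Scope ring_scope.

Definition is_subgroup_Cstar (F : fieldType) (G : F -> Prop) : Prop :=
  (forall g, G g -> g != 0) /\ G 1 /\
  (forall a b, G a -> G b -> G (a * b)) /\
  (forall a, G a -> G a^-1).

Definition is_group_hom_on (F : fieldType) (G : F -> Prop) (sigma : F -> F) : Prop :=
  (forall g, G g -> G (sigma g)) /\
  (forall a b, G a -> G b -> sigma (a * b) = sigma a * sigma b).

Definition accumulation_property (F : numFieldType) (G : F -> Prop) : Prop :=
  (exists q, G q /\ `|q| != 1) \/
  (exists g : nat -> F, (forall n, G (g n) /\ g n != 1) /\
     forall eps : F, 0 < eps -> exists N : nat, forall n, (N <= n)%N -> `|g n - 1| < eps).

From HB Require Import structures.
From mathcomp Require Import all_boot all_order all_algebra.
From mathcomp Require Import complex.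
From mathcomp Require Import reals.
From mathcomp Require Import ring.
Set Implicit Arguments. Unset Strict Implicit. Unset Printing Implicit Defensive.
Import Order.TTheory GRing.Theory Num.Theory.
Local Open Scope ring_scope.

(* Let a z^i and b z^j be the lowest-order terms of p and q.  Clearing
   denominators, the functional equation becomes the polynomial identity
   p(gX) q = sigma(g) p q(gX) for g in G, and comparing lowest coefficients
   gives sigma(g) g^j = g^i.  Hence z^j p / (z^i q) is invariant under every
   dilation z |-> g z with g in G.  If an invariant ratio u/v were not constant,
   the lowest term of b u - a v would have order m > i + j, and comparing lowest
   coefficients once more would give g^(m - i - j) = 1 on all of G.  The
   accumulation property forbids this, because a root of unity of order
   dividing t other than 1 lies at distance at least 1/t from 1. *)

Section LowestCoefficient.
Variable R : nzRingType.
Implicit Types u v : {poly R}.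

Definition low_index u : nat := find (predC1 0) u.

Definition low_coef u : R := u`_(low_index u).

Lemma coef_lt_low_index u k : (k < low_index u)%N -> u`_k = 0.
Proof. by move/(before_find 0)=> /negbFE/eqP. Qed.

Lemma low_coef_eq0 u : (low_coef u == 0) = (u == 0).
Proof.
have [->|u_neq0] := eqVneq u 0; first by rewrite /low_coef coef0 eqxx.
have has_nz : has (predC1 0) u.
  apply/hasP; exists (lead_coef u); last by rewrite /= lead_coef_eq0.
  by rewrite lead_coefE mem_nth // prednK // size_poly_gt0.
exact: negbTE (nth_find 0 has_nz).
Qed.

Lemma coefM_low u v i j :
  (forall k, (k < i)%N -> u`_k = 0) -> (forall k, (k < j)%N -> v`_k = 0) ->
  (u * v)`_(i + j) = u`_i * v`_j.
Proof.
move=> u_low v_low.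
rewrite coefM (bigD1 (Ordinal (leq_addr j i : i < (i + j).+1)%N)) //=.
rewrite addKn big1 ?addr0 // => k /eqP k_neq_i.
have [k_lt_i|k_gt_i|k_eq_i] := ltngtP k i; last by case: k_neq_i; apply: val_inj.
  by rewrite u_low ?mul0r.
by rewrite v_low ?mulr0 // ltn_subLR ?ltn_add2r // -ltnS.
Qed.

Lemma low_coefXnM n u : low_coef ('X^n * u) = low_coef u.
Proof.
have [->|u_neq0] := eqVneq u 0; first by rewrite mulr0.
rewrite /low_coef; have -> : low_index ('X^n * u) = (n + low_index u)%N.
  rewrite /low_index -commr_polyXn polyseqMXn // -cat_nseq find_cat has_nseq /=.
  by rewrite eqxx andbF size_nseq.
by rewrite coefXnM ltnNge leq_addr addKn.
Qed.

End LowestCoefficient.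

Section Dilation.
Variable R : comNzRingType.
Implicit Types (g c : R) (u v : {poly R}).

Lemma coef_comp_polyZX g u k : (u \Po (g *: 'X))`_k = g ^+ k * u`_k.
Proof.
rewrite comp_polyE (_ : \sum_(i < _) _ = \poly_(i < size u) (g ^+ i * u`_i)).
  by rewrite coef_poly; case: ltnP => // /(nth_default 0) ->; rewrite mulr0.
by rewrite poly_def; apply: eq_bigr => i _; rewrite exprZn scalerA mulrC.
Qed.

Definition dilation_eigen g c u v :=
  (u \Po (g *: 'X)) * v = c *: (u * (v \Po (g *: 'X))).

Lemma dilation_eigen_refl g v : dilation_eigen g 1 v v.
Proof. by rewrite /dilation_eigen scale1r mulrC. Qed.

Lemma dilation_eigenB g c a b u1 u2 v :
  dilation_eigen g c u1 v -> dilation_eigen g c u2 v ->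
  dilation_eigen g c (a *: u1 - b *: u2) v.
Proof.
rewrite /dilation_eigen comp_polyB !comp_polyZ => eig1 eig2.
rewrite mulrBl -!scalerAl eig1 eig2 mulrBl -!scalerAl scalerBr !scalerA.
by rewrite mulrC [c * b]mulrC.
Qed.

Lemma dilation_eigenXnM g c m n u v : c * g ^+ n = g ^+ m ->
  dilation_eigen g c u v -> dilation_eigen g 1 ('X^n * u) ('X^m * v).
Proof.
rewrite /dilation_eigen !comp_polyM !comp_Xn_poly !exprZn scale1r => <- eig.
transitivity ((g ^+ n)%:P * ('X^n * 'X^m) * ((u \Po (g *: 'X)) * v)).
  by rewrite -!mul_polyC; ring.
by rewrite eig -!mul_polyC polyCM; ring.
Qed.

End Dilation.

Section DilationIdomain.
Variable R : idomainType.
Implicit Types (g c : R) (u v : {poly R}).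

Lemma comp_polyZX_eq0 g u : g != 0 -> (u \Po (g *: 'X) == 0) = (u == 0).
Proof. by move=> g_neq0; rewrite comp_poly_eq0 // size_scale ?size_polyX. Qed.

Lemma dilation_eigen_low_index g c u v : u != 0 -> v != 0 ->
  dilation_eigen g c u v -> g ^+ low_index u = c * g ^+ low_index v.
Proof.
move=> u_neq0 v_neq0 /(congr1 (coefp (low_index u + low_index v))) /=.
have low_comp w k : (k < low_index w)%N -> (w \Po (g *: 'X))`_k = 0.
  by move=> k_lt; rewrite coef_comp_polyZX coef_lt_low_index ?mulr0.
rewrite coefZ !coefM_low; try exact: low_comp; try exact: coef_lt_low_index.
rewrite !coef_comp_polyZX -/(low_coef u) -/(low_coef v) => eq_low.
have ab_neq0 : low_coef u * low_coef v != 0 by rewrite mulf_neq0 ?low_coef_eq0.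
by apply: (mulIf ab_neq0); rewrite mulrA eq_low; ring.
Qed.

End DilationIdomain.

Definition no_finite_exponent (R : nzRingType) (G : R -> Prop) :=
  forall t, (0 < t)%N -> exists2 g, G g & g ^+ t != 1.

Section DilationInvariance.
Variables (R : idomainType) (G : R -> Prop).
Hypothesis G_neq0 : forall g, G g -> g != 0.
Hypothesis G_no_exponent : no_finite_exponent G.
Implicit Types u v : {poly R}.

Lemma eq_exponent_on m n : (forall g, G g -> g ^+ m = g ^+ n) -> m = n.
Proof.
wlog le_mn : m n / (m <= n)%N.
  move=> wlog eq_mn; have [/wlog -> //|/ltnW le_nm] := leqP m n.
  by apply/esym/wlog => // g /eq_mn.
move=> eq_mn; apply/eqP/negPn/negP => neq_mn.
have lt_mn : (m < n)%N by rewrite ltn_neqAle neq_mn.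
have [g Gg /eqP[]] : exists2 g, G g & g ^+ (n - m) != 1.
  by apply: G_no_exponent; rewrite subn_gt0.
apply: (mulfI (expf_neq0 m (G_neq0 Gg))).
by rewrite -exprD subnKC // mulr1 eq_mn.
Qed.

Lemma dilation_invariant_const u v : v != 0 ->
  (forall g, G g -> dilation_eigen g 1 u v) -> low_coef v *: u = low_coef u *: v.
Proof.
move=> v_neq0 inv.
have [->|u_neq0] := eqVneq u 0; first by rewrite /low_coef coef0 scale0r scaler0.
have same_low : low_index u = low_index v.
  apply: eq_exponent_on => g Gg.
  by rewrite (dilation_eigen_low_index u_neq0 v_neq0 (inv g Gg)) mul1r.
apply/eqP; rewrite -subr_eq0; set E := _ - _; apply: contraT => E_neq0.
have E_low k : (k <= low_index v)%N -> E`_k = 0.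
  rewrite /E coefB !coefZ leq_eqVlt => /predU1P[->|k_lt].
    by rewrite -{1}same_low -/(low_coef u) -/(low_coef v) mulrC subrr.
  by rewrite !coef_lt_low_index ?same_low // !mulr0 subrr.
have lt_low : (low_index v < low_index E)%N.
  rewrite ltnNge; apply: contra E_neq0 => /E_low/eqP.
  by rewrite -/(low_coef E) low_coef_eq0.
suff /eqP : low_index E = low_index v by rewrite gtn_eqF.
apply: eq_exponent_on => g Gg.
rewrite (@dilation_eigen_low_index _ g 1 _ _ E_neq0 v_neq0) ?mul1r //.
by apply: dilation_eigenB; [exact: inv | exact: dilation_eigen_refl].
Qed.

Lemma dilation_eigen_monomial (c : R -> R) u v : u != 0 -> v != 0 ->
  (forall g, G g -> dilation_eigen g (c g) u v) ->
  low_coef v *: ('X^(low_index v) * u) = low_coef u *: ('X^(low_index u) * v).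
Proof.
move=> u_neq0 v_neq0 eig.
rewrite -(low_coefXnM (low_index u) v) -(low_coefXnM (low_index v) u).
apply: dilation_invariant_const => [|g Gg].
  by rewrite mulf_neq0 // expf_neq0 // polyX_eq0.
apply: dilation_eigenXnM (eig g Gg).
exact/esym/dilation_eigen_low_index/eig.
Qed.

End DilationInvariance.

Lemma poly_eq0_off_roots (F : numDomainType) (d w : {poly F}) :
  w != 0 -> (forall z, w.[z] != 0 -> d.[z] = 0) -> d = 0.
Proof.
move=> w_neq0 d_off_roots.
have /eqP : d * w = 0.
  apply: (@roots_geq_poly_eq0 _ _ [seq i%:R | i <- iota 0 (size (d * w))]).
  - apply/allP => x _; rewrite rootE hornerM.
    by have [->|/d_off_roots ->] := eqVneq w.[x] 0; rewrite ?mulr0 ?mul0r.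
  - by rewrite map_inj_uniq ?iota_uniq // => i j /eqP; rewrite eqr_nat => /eqP.
  - by rewrite size_map size_iota.
by rewrite mulf_eq0 (negbTE w_neq0) orbF => /eqP.
Qed.

Lemma functional_eq_dilation_eigen (F : numFieldType) (g c : F) (p q : {poly F}) :
  g != 0 -> q != 0 ->
  (forall z, z != 0 -> q.[z] != 0 -> q.[g * z] != 0 ->
     p.[g * z] / q.[g * z] = c * (p.[z] / q.[z])) ->
  dilation_eigen g c p q.
Proof.
move=> g_neq0 q_neq0 feq; apply/eqP; rewrite -subr_eq0; apply/eqP.
apply: (@poly_eq0_off_roots _ _ ('X * q * (q \Po (g *: 'X)))).
  by rewrite !mulf_neq0 ?polyX_eq0 ?comp_polyZX_eq0.
move=> z; rewrite !hornerM hornerX !mulf_eq0 !negb_or horner_comp hornerZ hornerX.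
move=> /andP[/andP[z_neq0 qz_neq0] qgz_neq0].
rewrite hornerD hornerN hornerZ !hornerM !horner_comp hornerZ hornerX.
rewrite -[p.[g * z]](divfK qgz_neq0) feq //; field.
by rewrite qz_neq0.
Qed.

Lemma norm_exprB1_le (F : numDomainType) (g : F) k :
  `|g| = 1 -> `|g ^+ k - 1| <= k%:R * `|g - 1|.
Proof.
move=> g_norm1; elim: k => [|k IHk]; first by rewrite expr0 subrr normr0 mul0r.
have -> : g ^+ k.+1 - 1 = g * (g ^+ k - 1) + (g - 1) by rewrite exprS; ring.
rewrite (le_trans (ler_normD _ _)) // normrM g_norm1 mul1r.
by rewrite -natr1 mulrDl mul1r lerD.
Qed.

Lemma root_of_unity_dist1_ge (F : numFieldType) (g : F) t :
  (0 < t)%N -> g ^+ t = 1 -> g != 1 -> t%:R^-1 <= `|g - 1|.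
Proof.
move=> t_gt0 gt1 g_neq1.
have g_norm1 : `|g| = 1.
  by apply/eqP; rewrite -(pexpr_eq1 t_gt0) ?normr_ge0 // -normrX gt1 normr1.
have sum_pows : \sum_(i < t) g ^+ i = 0.
  have /esym/eqP := subrX1 g t; rewrite gt1 subrr mulf_eq0 subr_eq0 (negbTE g_neq1).
  by move/eqP.
have : t%:R <= t%:R * (t%:R * `|g - 1|) :> F.
  have {1}-> : t%:R = `|\sum_(i < t) (g ^+ i - 1)| :> F.
    by rewrite sumrB sum_pows sumr_const card_ord sub0r normrN normr_nat.
  apply: le_trans (ler_norm_sum _ _ _) _.
  rewrite [leRHS]mulr_natl -[in leRHS](card_ord t) -sumr_const; apply: ler_sum => i _.
  apply: le_trans (norm_exprB1_le i g_norm1) _.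
  by rewrite card_ord ler_wpM2r // ler_nat ltnW.
rewrite -[leLHS]mulr1 ler_pM2l ?ltr0n // => t_dist.
by rewrite -[leLHS]mul1r ler_pdivrMr ?ltr0n // mulrC.
Qed.

Lemma accumulation_no_finite_exponent (F : numFieldType) (G : F -> Prop) :
  accumulation_property G -> no_finite_exponent G.
Proof.
move=> [[q [Gq q_norm]] | [gs [G_gs gs_lim]]] t t_gt0.
  exists q => //; apply: contra q_norm => /eqP qt1.
  by rewrite -(pexpr_eq1 t_gt0) ?normr_ge0 // -normrX qt1 normr1.
have /gs_lim[N gs_near] : 0 < t%:R^-1 :> F by rewrite invr_gt0 ltr0n.
have [G_gsN gsN_neq1] := G_gs N.
exists (gs N) => //; apply/eqP => gsNt1.
have := root_of_unity_dist1_ge t_gt0 gsNt1 gsN_neq1.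
by move/(lt_le_trans (gs_near N (leqnn N))); rewrite ltxx.
Qed.

Local Open Scope complex_scope.

Theorem mainTheorem8 (R : realType) (G : R[i] -> Prop) (sigma : R[i] -> R[i])
    (p q : {poly R[i]}) :
  is_subgroup_Cstar G -> accumulation_property G -> is_group_hom_on G sigma ->
  q != 0 -> p != 0 ->
  (forall g z, G g -> z != 0 -> q.[z] != 0 -> q.[g * z] != 0 ->
     p.[g * z] / q.[g * z] = sigma g * (p.[z] / q.[z])) ->
  exists (c : R[i]) (n : int), c != 0 /\
    forall z, z != 0 -> q.[z] != 0 -> p.[z] / q.[z] = c * z ^ n.
Proof.
move=> [G_neq0 _] /accumulation_no_finite_exponent G_no_exponent _ q_neq0 p_neq0 feq.
have eig g : G g -> dilation_eigen g (sigma g) p q.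
  move=> Gg; apply: functional_eq_dilation_eigen (G_neq0 g Gg) q_neq0 _ => z.
  exact: feq.
have pq_eq := dilation_eigen_monomial G_neq0 G_no_exponent p_neq0 q_neq0 eig.
exists (low_coef p / low_coef q), ((low_index p)%:Z - (low_index q)%:Z).
split=> [|z z_neq0 qz_neq0]; first by rewrite mulf_neq0 ?invr_eq0 ?low_coef_eq0.
have := congr1 (horner^~ z) pq_eq; rewrite /= !hornerZ !hornerM !hornerXn => pq_z.
rewrite expfzDr // -invr_expz -!exprnP mulf_div; apply/eqP.
rewrite eqr_div ?mulf_neq0 ?low_coef_eq0 ?expf_neq0 //; apply/eqP.
by transitivity (low_coef q * (z ^+ low_index q * p.[z])); [ring | rewrite pq_z; ring].
Qed.
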